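(* Let $V$ be a finite set, $M$ a matching on $V$ and $A \subseteq V(M)$ with $A \cap m(A) = \emptyset$. Let $s \ge 0$ be an integer and let $H$ be a graph with vertex set contained in $V$ which is a vertex-disjoint union of non-trivial cliques having in total at least $2|M|+s$ vertices, and such that no edge of $H$ has both endpoints in $A \cup (V \setminus V(M))$. Then $H$ contains a matching of size $s$ each of whose edges has one endpoint in $V(M)\setminus (A \cup m(A))$ and the other endpoint in $A \cup (V\setminus V(M))$.
   Context: For a matching $M$ and $A \subseteq V(M)$, $m(A)$ denotes the set of vertices matched in $M$ to the vertices of $A$. A non-trivial clique is a complete graph on at least $2$ vertices. *)

From mathcomp Require Import all_boot.
Set Implicit Arguments. Unset Strict Implicit. Unset Printing Implicit Defensive.

Section Defs.
Variable T : finType.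

Definition is_matching (M : {set {set T}}) : bool :=
  [forall e in M, #|e| == 2] && trivIset M.

Definition Vm (M : {set {set T}}) : {set T} := cover M.

Definition mate (M : {set {set T}}) (A : {set T}) : {set T} :=
  [set y | [exists x in A, [set x; y] \in M]].

(* A graph H given as a vertex-disjoint union of non-trivial cliques:
   P is the family of vertex sets of the cliques. *)
Definition clique_union (P : {set {set T}}) : bool :=
  trivIset P && [forall B in P, 1 < #|B|].

Definition VH (P : {set {set T}}) : {set T} := cover P.

Definition hedge (P : {set {set T}}) (x y : T) : bool :=
  (x != y) && [exists B in P, (x \in B) && (y \in B)].
End Defs.

From mathcomp Require Import all_boot.
From mathcomp Require Import zify.

(* Let W := A ∪ (V \ V(M)) and C := V(M) \ (A ∪ m(A)).  The hypotheses say
   that W is independent in H, and V(M) splits into C, A and m(A), so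
   |V(M)| = 2|M| = |C| + |A| + |m(A)| with |m(A)| <= |A|.  Every vertex
   outside W ∪ C lies in m(A).

   Counting cliques: each clique meets W at most once, so at least
   |V(H) ∩ W| cliques meet W.  A clique meeting W but not C has a second
   vertex, lying outside W ∪ C, hence in m(A); so at most |m(A)| of them
   miss C.  Hence at least |V(H)| - 2|m(A)| - |C| >= s cliques meet both W
   and C, and choosing one edge between C and W inside each of s such
   cliques gives the required matching (distinct cliques are disjoint). *)

Lemma exists_subset_card {U : finType} {X : {set U}} {k : nat} :
  k <= #|X| -> exists2 Y : {set U}, Y \subset X & #|Y| = k.
Proof.
case/card_geqP => s [uniq_s size_s sub_s]; exists [set x in s].
  by apply/subsetP => x; rewrite inE => /sub_s.
by rewrite cardsE (card_uniqP uniq_s).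
Qed.

Section Matchings.
Context {T : finType}.
Implicit Types (M : {set {set T}}) (A : {set T}).

Lemma card_Vm M : is_matching M -> #|Vm M| = 2 * #|M|.
Proof.
case/andP => /forall_inP two_sets /eqP <-.
rewrite (eq_bigr (fun=> 2)) => [|e /two_sets/eqP //].
by rewrite sum_nat_const mulnC.
Qed.

Lemma matching_partner_uniq M x y y' :
  is_matching M -> [set x; y] \in M -> [set x; y'] \in M -> y = y'.
Proof.
case/andP => /forall_inP two_sets /trivIsetP disjM xyM xy'M.
have same_edge : [set x; y] = [set x; y'].
  apply/eqP; apply: contraT => /(disjM _ _ xyM xy'M) /disjointFr.
  by move=> /(_ _ (set21 x y)); rewrite set21.
have := two_sets _ xyM; rewrite cards2 => /eqP [] x_neq_y.
have : y \in [set x; y'] by rewrite -same_edge !inE eqxx orbT.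
by rewrite !inE => /orP [/eqP y_x|/eqP //]; rewrite y_x eqxx in x_neq_y.
Qed.

Lemma mate_sub_Vm M A : mate M A \subset Vm M.
Proof.
apply/subsetP => y; rewrite inE => /exists_inP [x _ xyM].
by apply/bigcupP; exists [set x; y] => //; rewrite !inE eqxx orbT.
Qed.

(* Mapping each vertex of A to its partner is onto m(A), so |m(A)| <= |A|. *)
Lemma card_mate M A : is_matching M -> #|mate M A| <= #|A|.
Proof.
move=> matchM; pose partner x := odflt x [pick y | [set x; y] \in M].
apply: leq_trans (leq_imset_card partner A); apply: subset_leq_card.
apply/subsetP => y; rewrite inE => /exists_inP [x xA xyM].
apply/imsetP; exists x => //; rewrite /partner.
case: pickP => [y' xy'M /=|/(_ y)]; last by rewrite xyM.
exact: matching_partner_uniq xyM xy'M.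
Qed.

Lemma card_Vm_split M A :
  A \subset Vm M -> [disjoint A & mate M A] ->
  #|Vm M :\: (A :|: mate M A)| + #|A| + #|mate M A| = #|Vm M|.
Proof.
move=> sAV dAm; have := cardsID (A :|: mate M A) (Vm M).
rewrite (setIidPr _) ?subUset ?sAV ?mate_sub_Vm //.
by rewrite cardsU (disjoint_setI0 dAm) cards0; lia.
Qed.

End Matchings.

Definition meeting {T : finType} (P : {set {set T}}) (X : {set T}) :
  {set {set T}} := [set B in P | [exists x in B, x \in X]].

Section CliqueUnion.
Context {T : finType} {P : {set {set T}}}.
Hypothesis cliquesP : clique_union P.

Lemma hedge_block {B : {set T}} {x y : T} :
  B \in P -> x \in B -> y \in B -> x != y -> hedge P x y.
Proof.
by move=> BP xB yB xy; rewrite /hedge xy; apply/exists_inP; exists B; rewrite ?xB.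
Qed.

Lemma trivIset_cliques : trivIset P.
Proof. by case/andP: cliquesP. Qed.

Section IndependentSet.
Context {W : {set T}}.
Hypothesis indepW : {in W &, forall x y, ~~ hedge P x y}.

(* An independent set meets each clique at most once. *)
Lemma card_indep_le_meeting : #|VH P :&: W| <= #|meeting P W|.
Proof.
rewrite -(@card_in_imset _ _ (pblock P)).
  apply: subset_leq_card; apply/subsetP => B /imsetP [x].
  rewrite inE => /andP [xH xW] ->; rewrite inE pblock_mem //=.
  by apply/exists_inP; exists x; rewrite ?mem_pblock.
move=> x y /setIP [xH xW] /setIP [yH yW] same_block.
have [//|x_neq_y] := eqVneq x y.
have xy_edge : hedge P x y.
  apply: (hedge_block (pblock_mem xH) _ _ x_neq_y); first by rewrite mem_pblock.
  by rewrite same_block mem_pblock.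
by have := indepW _ _ xW yW; rewrite xy_edge.
Qed.

(* A clique meeting W but not C has a second vertex, outside W and C;
   distinct cliques give distinct such vertices. *)
Lemma card_meeting_only (C : {set T}) :
  #|meeting P W :\: meeting P C| <= #|VH P :&: ~: (W :|: C)|.
Proof.
apply: leq_trans (leq_imset_card (pblock P) _); apply: subset_leq_card.
apply/subsetP => B; rewrite !inE.
move=> /andP [notBC /andP [BP /exists_inP [x xB xW]]].
rewrite BP /= in notBC.
have : 1 < #|B| by case/andP: cliquesP => _ /forall_inP; apply.
rewrite (cardD1 x) xB ltnS => /card_gt0P [z]; rewrite !inE => /andP [z_neq_x zB].
have zW : z \notin W.
  apply/negP => zW; have := indepW _ _ xW zW.
  by rewrite (hedge_block BP xB zB) // eq_sym.
have zC : z \notin C by apply: contraNN notBC => zC; apply/exists_inP; exists z.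
apply/imsetP; exists z; last by rewrite (def_pblock trivIset_cliques BP zB).
by rewrite !inE (negbTE zW) (negbTE zC) andbT; apply/bigcupP; exists B.
Qed.

(* Combining both bounds: every vertex of H lies in W, in C or outside
   W ∪ C, which bounds from below the number of cliques meeting W and C. *)
Lemma card_meeting_both (C : {set T}) :
  #|VH P| <=
    #|meeting P W :&: meeting P C| + 2 * #|VH P :&: ~: (W :|: C)| + #|C|.
Proof.
have cover3 : #|VH P| <= #|VH P :&: W| + #|VH P :&: ~: (W :|: C)| + #|C|.
  have sub : VH P \subset (VH P :&: W) :|: (VH P :&: ~: (W :|: C)) :|: C.
    by apply/subsetP => x xH; rewrite !inE xH; case: (x \in W); case: (x \in C).
  by apply: leq_trans (subset_leq_card sub) _; rewrite !cardsU; lia.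
have := cardsID (meeting P C) (meeting P W).
have := card_indep_le_meeting; have := card_meeting_only C; lia.
Qed.

End IndependentSet.

(* A chosen edge of a clique B from C to W (the empty set if there is none). *)
Definition block_edge (W C B : {set T}) : {set T} :=
  if [pick c in B :&: C] is Some c then
    if [pick w in B :&: W] is Some w then [set c; w] else set0
  else set0.

Lemma block_edgeP (W C B : {set T}) c0 w0 :
  c0 \in B :&: C -> w0 \in B :&: W ->
  exists c w, [/\ block_edge W C B = [set c; w], c \in B :&: C & w \in B :&: W].
Proof.
move=> c0BC w0BW; rewrite /block_edge.
case: pickP => [c cBC|/(_ c0)]; last by rewrite c0BC.
case: pickP => [w wBW|/(_ w0)]; last by rewrite w0BW.
by exists c, w.
Qed.

Lemma block_matching {W C : {set T}} {Q : {set {set T}}} :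
  [disjoint W & C] -> Q \subset meeting P W :&: meeting P C ->
  exists N : {set {set T}},
    [/\ is_matching N, #|N| = #|Q| &
      forall e, e \in N -> exists x y,
        [/\ e = [set x; y], hedge P x y, x \in C & y \in W]].
Proof.
move=> dWC sQ; pose edge := block_edge W C.
have edgeQ B : B \in Q -> B \in P /\ exists c w,
    [/\ edge B = [set c; w], c \in B :&: C & w \in B :&: W].
  move/(subsetP sQ); rewrite !inE => /andP [/andP [BP /exists_inP [w wB wW]]].
  move=> /andP [_ /exists_inP [c cB cC]]; split=> //.
  by apply: (@block_edgeP W C B c w); rewrite inE ?cB ?wB.
have C_neq_W c w : c \in C -> w \in W -> c != w.
  by move=> cC wW; apply: contraTneq cC => ->; rewrite (disjointFr dWC wW).
have edge_sub B : B \in Q -> edge B \subset B.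
  move=> /edgeQ [_ [c [w [-> /setIP [cB _] /setIP [wB _]]]]].
  by rewrite subUset !sub1set cB wB.
have edge_inj : {in Q &, injective edge}.
  move=> B1 B2 B1Q B2Q same_edge.
  have [B1P [c [w [edgeB1 /setIP [cB1 _] _]]]] := edgeQ _ B1Q.
  have cB2 : c \in B2.
    by apply: (subsetP (edge_sub _ B2Q)); rewrite -same_edge edgeB1 !inE eqxx.
  have [B2P _] := edgeQ _ B2Q.
  rewrite -(def_pblock trivIset_cliques B1P cB1).
  by rewrite (def_pblock trivIset_cliques B2P cB2).
exists (edge @: Q); split; last 2 first.
- exact: card_in_imset.
- move=> e /imsetP [B BQ ->].
  have [BP [c [w [edgeB /setIP [cB cC] /setIP [wB wW]]]]] := edgeQ _ BQ.
  by exists c, w; split=> //; exact: hedge_block BP cB wB (C_neq_W _ _ cC wW).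
apply/andP; split.
  apply/forall_inP => e /imsetP [B BQ ->].
  have [_ [c [w [-> /setIP [_ cC] /setIP [_ wW]]]]] := edgeQ _ BQ.
  by rewrite cards2 C_neq_W.
apply/trivIsetP => e1 e2 /imsetP [B1 B1Q ->] /imsetP [B2 B2Q ->] edges_neq.
have blocks_neq : B1 != B2 by apply: contraNneq edges_neq => ->.
have [[B1P _] [B2P _]] := (edgeQ _ B1Q, edgeQ _ B2Q).
have := trivIsetP trivIset_cliques _ _ B1P B2P blocks_neq.
by move/(disjointWl (edge_sub _ B1Q))/(disjointWr (edge_sub _ B2Q)).
Qed.

End CliqueUnion.

Theorem lemma2p3 (T : finType) (M : {set {set T}}) (A : {set T}) (s : nat)
    (P : {set {set T}}) :
  is_matching M ->
  A \subset Vm M ->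
  [disjoint A & mate M A] ->
  clique_union P ->
  2 * #|M| + s <= #|VH P| ->
  (forall x y, hedge P x y ->
     ~~ ((x \in A :|: ~: Vm M) && (y \in A :|: ~: Vm M))) ->
  exists N : {set {set T}},
    [/\ is_matching N, #|N| = s &
      forall e, e \in N -> exists x y,
        [/\ e = [set x; y], hedge P x y,
            x \in Vm M :\: (A :|: mate M A) & y \in A :|: ~: Vm M]].
Proof.
move=> matchM sAV dAm cliquesP sizeH no_W_edge.
set W := A :|: ~: Vm M; set C := Vm M :\: (A :|: mate M A).
have indepW : {in W &, forall x y, ~~ hedge P x y}.
  by move=> x y xW yW; apply: (contraL (no_W_edge x y)); rewrite xW yW.
have dWC : [disjoint W & C].
  rewrite -setI_eq0; apply/eqP/setP => x; rewrite !inE.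
  by case: (x \in A); case: (x \in Vm M); rewrite ?andbF.
have rest_mate : VH P :&: ~: (W :|: C) \subset mate M A.
  apply/subsetP => x; rewrite !(in_setI, in_setC, in_setU, in_setD).
  by case: (x \in A); case: (x \in Vm M); case: (x \in mate M A); rewrite ?andbF.
have many_blocks : s <= #|meeting P W :&: meeting P C|.
  have := card_meeting_both cliquesP indepW C; have := subset_leq_card rest_mate.
  have := card_mate M A matchM; have := card_Vm_split M A sAV dAm.
  have := card_Vm M matchM.
  rewrite -/C; lia.
have [Q sQ <-] := exists_subset_card many_blocks.
exact: (block_matching cliquesP dWC sQ).
Qed.
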